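(* Let $R$ be a $*$-ring. Then $R$ is strongly $J$-$*$-clean if and only if (1) $R/J(R)$, with the induced involution $(a+J(R))^*=a^*+J(R)$, is $*$-Boolean; (2) $R$ is abelian; and (3) every idempotent lifts modulo $J(R)$.
   Context: All rings are associative with identity. A $*$-ring is a ring $R$ with an involution $*$, i.e. a map $a\mapsto a^*$ with $(a+b)^*=a^*+b^*$, $(ab)^*=b^*a^*$, $(a^* )^*=a$. $J(R)$ denotes the Jacobson radical of $R$; it satisfies $J(R)^*\subseteq J(R)$, so the quotient inherits an involution. A projection is an element $e$ with $e^2=e=e^*$. $R$ is strongly $J$-$*$-clean if every $a\in R$ can be written $a=e+u$ with $e$ a projection, $u\in J(R)$ and $ae=ea$. A $*$-ring is $*$-Boolean if every element is a projection. A ring is abelian if all its idempotents are central. Idempotents lift modulo $J(R)$ means: for every $x\in R$ with $x-x^2\in J(R)$ there is an idempotent $f\in R$ with $x-f\in J(R)$. *)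

From HB Require Import structures.
From mathcomp Require Import all_boot all_algebra.
Set Implicit Arguments. Unset Strict Implicit. Unset Printing Implicit Defensive.
Import GRing.Theory.
Local Open Scope ring_scope.

Definition involution (R : pzRingType) (star : R -> R) : Prop :=
  [/\ forall a b : R, star (a + b) = star a + star b,
      forall a b : R, star (a * b) = star b * star a
    & forall a : R, star (star a) = a].

Definition left_ideal (R : pzRingType) (I : R -> Prop) : Prop :=
  [/\ I 0,
      forall x y, I x -> I y -> I (x + y),
      forall x, I x -> I (- x)
    & forall r x, I x -> I (r * x)].

Definition maximal_left_ideal (R : pzRingType) (I : R -> Prop) : Prop :=
  [/\ left_ideal I, ~ I 1 &
      forall K : R -> Prop, left_ideal K -> ~ K 1 ->
        (forall x, I x -> K x) -> forall x, K x -> I x].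

Definition jacobson (R : pzRingType) (x : R) : Prop :=
  forall I : R -> Prop, maximal_left_ideal I -> I x.

Definition projection (R : pzRingType) (star : R -> R) (e : R) : Prop :=
  e * e = e /\ star e = e.

Definition strongly_J_star_clean (R : pzRingType) (star : R -> R) : Prop :=
  forall a : R, exists e u : R,
    [/\ projection star e, jacobson u, a = e + u & a * e = e * a].

(* R/J(R) with the induced involution is *-Boolean: every coset a + J(R) is a
   projection, i.e. (a+J)^2 = a+J and (a+J)^* = a^* + J = a+J, unfolded as
   membership of the differences in J(R). *)
Definition quotient_J_star_boolean (R : pzRingType) (star : R -> R) : Prop :=
  forall a : R, jacobson (a * a - a) /\ jacobson (star a - a).

Definition abelian_ring (R : pzRingType) : Prop :=
  forall e : R, e * e = e -> forall x : R, e * x = x * e.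

Definition idempotents_lift_mod_J (R : pzRingType) : Prop :=
  forall x : R, jacobson (x - x * x) ->
    exists f : R, f * f = f /\ jacobson (x - f).

From mathcomp Require Import all_boot all_algebra.
From mathcomp Require Import boolp classical_sets.
Set Implicit Arguments. Unset Strict Implicit. Unset Printing Implicit Defensive.
Import GRing.Theory.
Local Open Scope ring_scope.
Local Open Scope classical_set_scope.

(* An element of J(R) is "invisible" to idempotents: an idempotent in J(R) is
   0, so two commuting idempotents congruent modulo J(R) coincide. In a
   strongly J-*-clean ring this forces every idempotent to equal its clean
   projection, hence to be self-adjoint; then e + e x (1 - e) is a projection
   too, which kills the corner e x (1 - e) and makes R abelian. Conversely,
   lift a + J(R) to an idempotent f; f and f^* are commuting idempotents
   congruent modulo J(R), so f is a projection and a = f + (a - f). *)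

Lemma Zorn_bigcup_above (T : Type) (P : set (set T)) (A0 : set T) :
  A0 !=set0 -> P A0 ->
  (forall F : set (set T), F `<=` P -> total_on F subset -> F !=set0 ->
     P (\bigcup_(X in F) X)) ->
  exists A, [/\ P A, A0 `<=` A & forall B, A `<=` B -> P B -> B `<=` A].
Proof.
move=> A0n PA0 chainP.
(* [set0] is adjoined so that the empty chain has an upper bound. *)
pose Q X := X = set0 \/ P X /\ A0 `<=` X.
have [A [QA maxA]] : exists A, Q A /\ forall B, A `<` B -> ~ Q B.
  apply: Zorn_bigcup => F FQ Ftot.
  have [[X [FX [x Xx]]]|Fempty] := pselect (exists X, F X /\ X !=set0); last first.
    left; apply/seteqP; split => // y [X FX Xy].
    by apply: Fempty; exists X; split => //; exists y.
  pose G := [set Y | F Y /\ Y !=set0].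
  have GP : G `<=` P by move=> Y [/FQ [->[]//|[]]].
  have -> : \bigcup_(Y in F) Y = \bigcup_(Y in G) Y.
    apply/seteqP; split => y [Y FY Yy]; exists Y => //; last by case: FY.
    by split => //; exists y.
  have [_ A0X] : P X /\ A0 `<=` X by case: (FQ _ FX) => // X0; move: Xx; rewrite X0.
  right; split.
    apply: chainP => //; first by move=> Y Z [FY _] [FZ _]; apply: Ftot.
    by exists X; split => //; exists x.
  by move=> y /A0X Xy; exists X => //; split => //; exists x.
case: QA => [A0E|[PA A0A]].
  have [a A0a] := A0n.
  exfalso; apply: (maxA A0); last by right; split.
  by rewrite A0E; split => // /(_ a A0a).
exists A; split => // B AB PB; apply: contrapT => nBA.
by apply: (maxA B); [split|right; split => //; apply: subset_trans AB].
Qed.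

Section LeftIdeals.
Variable R : pzRingType.
Implicit Types (I L : set R) (F : set (set R)).

Lemma left_ideal_bigcup_chain F :
  F `<=` @left_ideal R -> total_on F subset -> F !=set0 ->
  left_ideal (\bigcup_(I in F) I).
Proof.
move=> Fideal Ftot [I0 FI0]; split.
- by exists I0 => //; case: (Fideal _ FI0).
- move=> x y [I FI Ix] [K FK Ky].
  have [IK|KI] := Ftot _ _ FI FK.
    by exists K => //; case: (Fideal _ FK) => _ + _ _; apply; [apply: IK|].
  by exists I => //; case: (Fideal _ FI) => _ + _ _; apply; [|apply: KI].
- by move=> x [I FI Ix]; exists I => //; case: (Fideal _ FI) => _ _ + _; apply.
- by move=> r x [I FI Ix]; exists I => //; case: (Fideal _ FI) => _ _ _; apply.
Qed.

Lemma maximal_left_ideal_above L : left_ideal L -> ~ L 1 ->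
  exists M, maximal_left_ideal M /\ L `<=` M.
Proof.
move=> Lideal L1.
pose P := [set I : set R | left_ideal I /\ ~ I 1].
have [|//|F FP Ftot Fn0|M [[Mideal M1] LM Mmax]] := @Zorn_bigcup_above _ P L.
- by exists 0; case: Lideal.
- split; first by apply: left_ideal_bigcup_chain => // I /FP[].
  by move=> [I /FP[]].
- by exists M; split => //; split => // K Kideal K1 MK; apply: Mmax.
Qed.

End LeftIdeals.

Section Jacobson.
Variable R : pzRingType.
Implicit Types (e f g j r x y : R).

Lemma jacobsonD x y : jacobson x -> jacobson y -> jacobson (x + y).
Proof.
by move=> Jx Jy I MI; case: (MI) => [[_ + _ _] _ _]; apply; [apply: Jx|apply: Jy].
Qed.

Lemma jacobsonN x : jacobson x -> jacobson (- x).
Proof. by move=> Jx I MI; case: (MI) => [[_ _ + _] _ _]; apply; apply: Jx. Qed.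

Lemma jacobsonB x y : jacobson x -> jacobson y -> jacobson (x - y).
Proof. by move=> Jx Jy; apply: jacobsonD => //; apply: jacobsonN. Qed.

Lemma jacobsonMl r x : jacobson x -> jacobson (r * x).
Proof. by move=> Jx I MI; case: (MI) => [[_ _ _ +] _ _]; apply; apply: Jx. Qed.

(* [R (1 - j)] would otherwise be a proper left ideal, hence inside a maximal
   one together with [j]. *)
Lemma jacobson_linv j : jacobson j -> exists v, v * (1 - j) = 1.
Proof.
move=> Jj; apply: contrapT => noinv.
pose L := [set x | exists r, x = r * (1 - j)].
have Lideal : left_ideal L.
  split.
  - by exists 0; rewrite mul0r.
  - by move=> _ _ [r ->] [s ->]; exists (r + s); rewrite mulrDl.
  - by move=> _ [r ->]; exists (- r); rewrite mulNr.
  - by move=> s _ [r ->]; exists (s * r); rewrite mulrA.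
have [|M [MM LM]] := maximal_left_ideal_above Lideal.
  by move=> [v v1]; apply: noinv; exists v.
have [[_ MD _ _] M1 _] := MM.
apply: M1; rewrite -(subrK j 1) addrC.
by apply: MD; [apply: Jj | apply: LM; exists 1; rewrite mul1r].
Qed.

Lemma jacobson_inv j : jacobson j -> exists w, w * (1 - j) = 1 /\ (1 - j) * w = 1.
Proof.
move=> Jj; have [v v1] := jacobson_linv Jj.
have vE : v = 1 - (- (v * j)) by rewrite opprK -v1 mulrBr mulr1 subrK.
have [w wv] := jacobson_linv (jacobsonN (jacobsonMl v Jj)).
rewrite -vE in wv.
have wE : w = 1 - j by rewrite -[w]mulr1 -{1}v1 mulrA wv mul1r.
by exists v; split => //; rewrite -wE.
Qed.

(* Conversely, a maximal left ideal [I] missing [x] satisfies [I + R x = R],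
   so [1 - r x] lies in [I] for some [r]. *)
Lemma jacobsonP x : (forall r, exists v, v * (1 - r * x) = 1) -> jacobson x.
Proof.
move=> inv I [[I0 ID IN IM] I1 Imax]; apply: contrapT => nIx.
pose K := [set y | exists m r, I m /\ y = m + r * x].
have Kideal : left_ideal K.
  split.
  - by exists 0, 0; rewrite mul0r addr0.
  - move=> _ _ [m [r [Im ->]]] [n [s [In ->]]].
    by exists (m + n), (r + s); rewrite mulrDl addrACA; split => //; apply: ID.
  - move=> _ [m [r [Im ->]]].
    by exists (- m), (- r); rewrite mulNr opprD; split => //; apply: IN.
  - move=> s _ [m [r [Im ->]]].
    by exists (s * m), (s * r); rewrite mulrDr mulrA; split => //; apply: IM.
have [[m [r [Im E]]]|nK1] := pselect (K 1).
  have [v v1] := inv r; apply: I1; rewrite -v1; apply: IM.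
  by rewrite E addrK.
apply: nIx; apply: (Imax K Kideal nK1).
  by move=> y Iy; exists y, 0; rewrite mul0r addr0.
by exists 0, 1; rewrite mul1r add0r.
Qed.

(* A left inverse [w] of [1 - y r x] yields the left inverse [1 + r x w y] of
   [1 - r x y]. *)
Lemma jacobsonMr x y : jacobson x -> jacobson (x * y).
Proof.
move=> Jx; apply: jacobsonP => r.
have [w w1] := jacobson_linv (jacobsonMl (y * r) Jx).
exists (1 + r * x * w * y).
have := congr1 (fun t => r * x * t * y) w1.
rewrite /= !mulrBr !mulrBl !mulr1 !mulrA => rxy.
by rewrite mulrDl mul1r !mulrDl -rxy subrK addrK.
Qed.

Lemma jacobson_idem_eq0 e : e * e = e -> jacobson e -> e = 0.
Proof.
move=> ee Je; have [v v1] := jacobson_linv Je.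
by rewrite -[e]mul1r -v1 -mulrA mulrBl mul1r ee subrr mulr0.
Qed.

Lemma comm_idem_jacobson_eq f g : f * f = f -> g * g = g -> f * g = g * f ->
  jacobson (f - g) -> f = g.
Proof.
(* [f - f g = f (f - g)] is an idempotent lying in J(R). *)
have absorb f' g' : f' * f' = f' -> g' * g' = g' -> f' * g' = g' * f' ->
    jacobson (f' - g') -> f' = f' * g'.
  move=> ff gg fg Jfg; apply/eqP; rewrite -subr_eq0; apply/eqP.
  apply: jacobson_idem_eq0; last by rewrite -[X in X - _]ff -mulrBr; apply: jacobsonMl.
  have fgf : f' * g' * f' = f' * g' by rewrite -mulrA -fg mulrA ff.
  have fgfg : f' * g' * (f' * g') = f' * g' by rewrite mulrA fgf -mulrA gg.
  by rewrite mulrBr !mulrBl ff fgf mulrA ff fgfg subrr subr0.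
move=> ff gg fg Jfg; rewrite (absorb f g) // fg -(absorb g f) //.
by rewrite -opprB; apply: jacobsonN.
Qed.

End Jacobson.

Section Involution.
Variables (R : pzRingType) (star : R -> R).
Hypothesis star_inv : involution star.
Implicit Types (a e f u x : R).

Let starD a b : star (a + b) = star a + star b. Proof. by case: star_inv. Qed.
Let starM a b : star (a * b) = star b * star a. Proof. by case: star_inv. Qed.
Let starK a : star (star a) = a. Proof. by case: star_inv. Qed.

Lemma starB a b : star (a - b) = star a - star b.
Proof. by apply: (@addIr _ (star b)); rewrite -starD !subrK. Qed.

Lemma star1 : star 1 = 1.
Proof. by have := starM (star 1) 1; rewrite mulr1 starK mulr1 => <-. Qed.

Lemma jacobson_star x : jacobson x -> jacobson (star x).
Proof.
move=> Jx; apply: jacobsonP => r.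
have [w [_ w1]] := jacobson_inv (jacobsonMr (star r) Jx).
by exists (star w); rewrite -[r]starK -starM -star1 -starB -starM w1.
Qed.

Section StronglyJStarClean.
Hypothesis clean : strongly_J_star_clean star.

Lemma clean_idem_projection e : e * e = e -> star e = e.
Proof.
move=> ee; have [f [u [[ff sf] Ju eE ef]]] := clean e.
suff -> : e = f by [].
apply: comm_idem_jacobson_eq => //.
by rewrite {1}eE addrAC subrr add0r.
Qed.

(* [e + e x (1 - e)] is idempotent, hence self-adjoint; so [e x (1 - e)] equals
   its adjoint [(1 - e) x^* e], which [e] annihilates on the left. *)
Lemma clean_idem_corner_eq0 x e : e * e = e -> e * x * (1 - e) = 0.
Proof.
move=> ee; have se := clean_idem_projection ee.
set y := e * x * (1 - e).
have ye : y * e = 0 by rewrite /y -mulrA mulrBl mul1r ee subrr mulr0.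
have ey : e * y = y by rewrite /y !mulrA ee.
have yy : y * y = 0 by rewrite {2}/y !mulrA ye !mul0r.
have sy : star y = y.
  have : (e + y) * (e + y) = e + y by rewrite mulrDl !mulrDr ee ey ye yy !addr0.
  by move/clean_idem_projection; rewrite starD se => /addrI.
by rewrite -ey -sy /y !starM starB star1 se mulrA mulrBr mulr1 ee subrr !mul0r.
Qed.

Lemma clean_abelian : abelian_ring R.
Proof.
move=> e ee x; have se := clean_idem_projection ee.
have := clean_idem_corner_eq0 x ee; rewrite mulrBr mulr1 => /subr0_eq exe.
have := clean_idem_corner_eq0 (star x) ee; rewrite mulrBr mulr1 => /subr0_eq exse.
have := congr1 star exse; rewrite !starM starK se => xe.
by rewrite exe xe mulrA.
Qed.

Lemma clean_quotient_J_star_boolean : quotient_J_star_boolean star.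
Proof.
move=> a; have [e [u [[ee se] Ju -> ae]]] := clean a.
have ue : u * e = e * u by move: ae; rewrite mulrDl mulrDr ee => /addrI.
split.
  rewrite mulrDl !mulrDr ee ue opprD addrACA (addrAC e) subrr add0r.
  apply: jacobsonD; first exact: jacobsonMl.
  by apply: jacobsonB => //; apply: jacobsonD; exact: jacobsonMl.
rewrite starD se opprD addrACA subrr add0r.
by apply: jacobsonB => //; apply: jacobson_star.
Qed.

Lemma clean_idempotents_lift : idempotents_lift_mod_J R.
Proof.
move=> x _; have [e [u [[ee _] Ju xE _]]] := clean x.
by exists e; rewrite xE addrAC subrr add0r.
Qed.

End StronglyJStarClean.

Lemma clean_of_quotient_J_star_boolean :
  quotient_J_star_boolean star -> abelian_ring R -> idempotents_lift_mod_J R ->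
  strongly_J_star_clean star.
Proof.
move=> qb ab lift a.
have Ja : jacobson (a - a * a) by rewrite -opprB; apply: jacobsonN; exact: (qb a).1.
have [f [ff Jaf]] := lift a Ja.
have sff : star f * star f = star f by rewrite -starM ff.
exists f, (a - f); split; last by rewrite (ab f ff a).
- split => //; apply: comm_idem_jacobson_eq => //; first exact: ab.
  exact: (qb f).2.
- exact: Jaf.
- by rewrite addrC subrK.
Qed.

End Involution.

Theorem corollary3p8 (R : pzRingType) (star : R -> R) :
  involution star ->
  (strongly_J_star_clean star <->
   [/\ quotient_J_star_boolean star, abelian_ring R & idempotents_lift_mod_J R]).
Proof.
move=> star_inv; split.
  move=> clean; split.
  - exact: clean_quotient_J_star_boolean star_inv clean.
  - exact: clean_abelian star_inv clean.
  - exact: clean_idempotents_lift clean.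
by case; apply: clean_of_quotient_J_star_boolean.
Qed.
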